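(* Let $b>1$ and $\mu\ge0$. Suppose: (i) $P$ satisfies $(1/2,b)$-multiplicative-expansion on $\mathcal{X}$; (ii) $P$ is $\mathcal{A}$-separated by the ground-truth classifier, i.e. $\mathcal{R}_{\mathcal{A}}(G^* )\le\mu$; (iii) for classifiers $G$, whenever $P$ satisfies $(c,\rho)$-constant-expansion for some $c$, $\mathcal{R}_{\mathcal{A}}(G)<\rho$, and $\min_i P(\{x:G(x)=i\})>2\max\{c,\mathcal{R}_{\mathcal{A}}(G)\}$, there exists a permutation $\pi$ of $[K]$ with $P(\{x:\pi(G(x))\neq G^*(x)\})\le\max\{c,\mathcal{R}_{\mathcal{A}}(G)\}+\mathcal{R}_{\mathcal{A}}(G)$. Assume further $\min_{y\in[K]}P(\{x:G^*(x)=y\})>\max\{\frac{2}{b-1},2\}\mu$. Then any minimizer $\widehat G$ of $$\min_G \mathcal{R}_{\mathcal{A}}(G)\quad\text{subject to}\quad \min_{y\in[K]}\mathbb{E}_P[\mathbf{1}(G(x)=y)]>\max\left\{\tfrac{2}{b-1},2\right\}\mathcal{R}_{\mathcal{A}}(G)$$ (over classifiers $G:\mathcal{X}\to[K]$) satisfies $\mathrm{Err}_{\mathrm{unsup}}(\widehat G)\le\max\left\{\tfrac{2}{b-1},2\right\}\mu$.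
   Context: $P$ is a distribution on $\mathcal{X}$ with ground-truth labelling $G^*:\mathcal{X}\to[K]$, $\mathcal{Q}_i:=\{x:G^*(x)=i\}$, $P_i(S)=P(S\cap\mathcal{Q}_i)/P(\mathcal{Q}_i)$. With augmentation maps $\mathcal{T}_{wa}$ and radius $r$: $\mathcal{A}(x):=\{x':\exists T\in\mathcal{T}_{wa},\ \|x'-T(x)\|\le r\}$, $\mathcal{N}(x):=\{x':\mathcal{A}(x)\cap\mathcal{A}(x')\neq\emptyset\}$, $\mathcal{N}(S):=\bigcup_{x\in S}\mathcal{N}(x)$, $\mathcal{N}^*(S):=\bigcup_{i}(\mathcal{N}(S\cap\mathcal{Q}_i)\cap\mathcal{Q}_i)$. $(a,b)$-multiplicative-expansion: for every $i$ and $S\subseteq\mathcal{Q}_i$ with $P_i(S)\le a$, $P_i(\mathcal{N}(S))\ge\min\{bP_i(S),1\}$. $(c,\rho)$-constant-expansion: for every $S$ with $P(S)\ge c$ and $P(S\cap\mathcal{Q}_i)\le P(\mathcal{Q}_i)/2$ for all $i$, $P(\mathcal{N}^*(S)\setminus S)\ge\min\{\rho,P(S)\}$. $\mathcal{R}_{\mathcal{A}}(G):=\mathbb{E}_{x\sim P}[\mathbf{1}(\exists x'\in\mathcal{A}(x)\text{ with }G(x')\neq G(x))]$. $\mathrm{Err}_{\mathrm{unsup}}(G):=\min_{\pi}P(\{x:\pi(G(x))\neq G^*(x)\})$ over permutations $\pi$ of $[K]$. *)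

From HB Require Import structures.
From mathcomp Require Import all_boot all_order all_algebra.
From mathcomp Require Import all_classical all_reals all_analysis.
From mathcomp Require Import fingroup perm.
Set Implicit Arguments. Unset Strict Implicit. Unset Printing Implicit Defensive.
Import Order.TTheory GRing.Theory Num.Theory.
Local Open Scope classical_set_scope.
Local Open Scope ring_scope.

Section Defs.
Context {d : measure_display} {X : measurableType d} {R : realType}.
Variable P : probability X R.

(* Probability of an arbitrary (possibly non-measurable) set:
   the outer measure induced by P, as a real number. *)
Definition Pr (S : set X) : R := fine (mu_ext P S).

Variable K : nat.

Definition classifier (G : X -> 'I_K) : Prop :=
  forall i : 'I_K, measurable (G @^-1` [set i]).

Variable Gstar : X -> 'I_K.
Definition Qc (i : 'I_K) : set X := [set x | Gstar x = i].
Definition Pc (i : 'I_K) (S : set X) : R := Pr (S `&` Qc i) / Pr (Qc i).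

(* augmentation set A(x) = {x' | exists T in Twa, ||x' - T x|| <= r},
   with dist x' y standing for ||x' - y|| *)
Variable dist : X -> X -> R.
Variable Twa : set (X -> X).
Variable r : R.
Definition Aug (x : X) : set X :=
  [set x' | exists2 T, Twa T & dist x' (T x) <= r].
Definition Nb (x : X) : set X := [set x' | Aug x `&` Aug x' !=set0].
Definition NbS (S : set X) : set X := \bigcup_(x in S) Nb x.
Definition NbStar (S : set X) : set X :=
  \bigcup_(i in [set: 'I_K]) (NbS (S `&` Qc i) `&` Qc i).

Definition mult_expansion (a b : R) : Prop :=
  forall (i : 'I_K) (S : set X), S `<=` Qc i -> Pc i S <= a ->
    Pc i (NbS S) >= Num.min (b * Pc i S) 1.

Definition const_expansion (c rho : R) : Prop :=
  forall S : set X, Pr S >= c ->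
    (forall i : 'I_K, Pr (S `&` Qc i) <= Pr (Qc i) / 2) ->
    Pr (NbStar S `\` S) >= Num.min rho (Pr S).

Definition RA (G : X -> 'I_K) : R :=
  Pr [set x | exists2 x', Aug x x' & G x' <> G x].

Definition mismatch (G : X -> 'I_K) (pi : {perm 'I_K}) : R :=
  Pr [set x | pi (G x) <> Gstar x].

Definition Err_unsup (G : X -> 'I_K) : R :=
  \big[Num.min/1]_(pi : {perm 'I_K}) mismatch G pi.

End Defs.

(* Multiplicative expansion with factor b > 1 gives constant expansion with
   rate rho = (b - 1) c for every threshold c: a class-balanced set S grows,
   inside each class, by at least min (b - 1, 1) times its mass.  The
   ground truth is feasible for the constrained problem, so the minimizer
   Ghat has a := R_A(Ghat) <= R_A(Gstar) <= mu.  Hypothesis (iii) applied to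
   Ghat with c slightly above a / (b - 1) (the strict inequalities in (iii)
   force the slack) bounds the error by max (a / (b - 1), a) + a, which is
   at most max (2 / (b - 1), 2) a. *)

From HB Require Import structures.
From mathcomp Require Import all_boot all_order all_algebra.
From mathcomp Require Import all_classical all_reals all_analysis.
From mathcomp Require Import fingroup perm.
From mathcomp Require Import lra.
Import Order.TTheory GRing.Theory Num.Theory.
Local Open Scope classical_set_scope.
Local Open Scope ring_scope.

Section OuterProbability.
Context {d : measure_display} {X : measurableType d} {R : realType}.
Variable P : probability X R.

Lemma PrE (A : set X) : ((Pr P A)%:E = mu_ext P A)%E.
Proof.
have le1 : (mu_ext P A <= 1)%E.
  apply: (@le_trans _ _ (mu_ext P setT)); first exact: le_mu_ext.
  by rewrite measurable_mu_extE // probability_le1.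
rewrite /Pr fineK // ge0_fin_numE ?mu_ext_ge0 //.
exact: le_lt_trans le1 (ltry _).
Qed.

Lemma Pr_ge0 (A : set X) : 0 <= Pr P A.
Proof. by rewrite -lee_fin PrE mu_ext_ge0. Qed.

Lemma Pr0 : Pr P set0 = 0.
Proof. by apply: EFin_inj; rewrite PrE mu_ext0. Qed.

Lemma le_Pr (A B : set X) : A `<=` B -> Pr P A <= Pr P B.
Proof. by move=> AB; rewrite -lee_fin !PrE le_mu_ext. Qed.

Lemma Pr_setU_le (A B : set X) : Pr P (A `|` B) <= Pr P A + Pr P B.
Proof. by rewrite -lee_fin EFinD !PrE outer_measureU2. Qed.

Lemma Pr_setD_ge (A B : set X) : Pr P A - Pr P B <= Pr P (A `\` B).
Proof.
rewrite lerBlDr; apply: le_trans (Pr_setU_le _ _); apply: le_Pr.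
by move=> x Ax; case: (pselect (B x)) => Bx; [right|left].
Qed.

Lemma Pr_setIC_split (A Q : set X) : measurable Q ->
  Pr P A = Pr P (A `&` Q) + Pr P (A `&` ~` Q).
Proof.
move=> mQ; apply: EFin_inj; rewrite EFinD !PrE.
exact: caratheodory_measurable_mu_ext.
Qed.

Context {K : nat} {G : X -> 'I_K}.
Hypothesis mG : classifier G.

Lemma Pr_partition_seq (A : set X) (s : seq 'I_K) : uniq s ->
  Pr P (A `&` [set x | G x \in s]) =
  \sum_(i <- s) Pr P (A `&` [set x | G x = i]).
Proof.
elim: s => [_|i s IH /andP[nis us]].
  by rewrite big_nil (_ : _ `&` _ = set0) ?Pr0 //; apply/seteqP; split=> x [].
rewrite big_cons -IH // (Pr_setIC_split _ _ (mG i)).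
congr (Pr P _ + Pr P _); apply/seteqP; split => x /=.
- by move=> [[Ax _] ->].
- by move=> [Ax ->]; rewrite inE eqxx.
- by move=> [[Ax]]; rewrite inE => /orP[/eqP ->|].
- move=> [Ax xs]; split; first by rewrite inE xs orbT.
  by move=> Gi; move: nis; rewrite -Gi xs.
Qed.

Lemma Pr_partition (A : set X) :
  Pr P A = \sum_(i <- enum 'I_K) Pr P (A `&` [set x | G x = i]).
Proof.
rewrite -Pr_partition_seq ?enum_uniq //; congr (Pr P _).
by apply/seteqP; split => x /= => [Ax|[]//]; rewrite mem_enum.
Qed.

End OuterProbability.

Section Expansion.
Context {d : measure_display} {X : measurableType d} {R : realType}.
Context {P : probability X R} {K : nat} {Gstar : X -> 'I_K}.
Context {dist : X -> X -> R} {Twa : set (X -> X)} {r b : R}.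
Hypotheses (b_gt1 : 1 < b) (mGstar : classifier Gstar).
Hypothesis Qc_gt0 : forall i, 0 < Pr P (Qc Gstar i).
Hypothesis mexp : mult_expansion P Gstar dist Twa r (1 / 2) b.

Let k := Num.min (b - 1) 1.

Lemma mult_expansion_class_growth (S : set X) (i : 'I_K) :
  Pr P (S `&` Qc Gstar i) <= Pr P (Qc Gstar i) / 2 ->
  k * Pr P (S `&` Qc Gstar i) <=
    Pr P ((NbStar Gstar dist Twa r S `\` S) `&` Qc Gstar i).
Proof.
set Si := S `&` Qc Gstar i; set q := Pr P (Qc Gstar i); set s := Pr P Si.
set n := Pr P (NbS dist Twa r Si `&` Qc Gstar i) => hsq.
have s0 : 0 <= s by apply: Pr_ge0.
have q0 := Qc_gt0 i.
have SiQ : Si `&` Qc Gstar i = Si by rewrite /Si -setIA setIid.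
have := mexp i Si (@subIsetr _ _ _).
rewrite /Pc SiQ -/s -/n -/q => /(_ _)/wrap[].
  by rewrite ler_pdivrMr // mul1r mulrC.
rewrite ge_min mulrA ler_pM2r ?invr_gt0 // ler_pdivlMr // mul1r => hn.
have grow : n - s <= Pr P ((NbStar Gstar dist Twa r S `\` S) `&` Qc Gstar i).
  apply: le_trans (Pr_setD_ge P _ Si) _; apply: le_Pr.
  move=> x [[Nx Qx] nSx]; split=> //; split; first by exists i.
  by move=> Sx; apply: nSx.
have kb : k * s <= (b - 1) * s by apply: ler_wpM2r => //; rewrite /k ge_min lexx.
have k1 : k * s <= 1 * s by apply: ler_wpM2r => //; rewrite /k ge_min lexx orbT.
case/orP: hn => hn; lra.
Qed.

Lemma mult_expansion_const_expansion (c : R) :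
  const_expansion P Gstar dist Twa r c ((b - 1) * c).
Proof.
move=> S hc hbal.
apply: le_trans (_ : k * Pr P S <= _).
  rewrite ge_min /k; case: (leP (b - 1) 1) => hb1.
    by apply/orP; left; rewrite ler_wpM2l // subr_ge0 ltW.
  by apply/orP; right; rewrite mul1r.
rewrite (Pr_partition P mGstar S) (Pr_partition P mGstar (_ `\` _)).
by rewrite mulr_sumr; apply: ler_sum => i _; apply: mult_expansion_class_growth.
Qed.

End Expansion.

Lemma max_slack_scale (R : numFieldType) (a b : R) : 0 <= a ->
  2 * Num.max (a / (b - 1)) a = Num.max (2 / (b - 1)) 2 * a.
Proof. by move=> a_ge0; rewrite maxr_pMr // maxr_pMl // mulrCA mulrC. Qed.

Section Recovery.
Context {d : measure_display} {X : measurableType d} {R : realType}.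
Context {P : probability X R} {K : nat} {Gstar : X -> 'I_K}.
Context {dist : X -> X -> R} {Twa : set (X -> X)} {r b : R}.
Hypothesis b_gt1 : 1 < b.
Hypothesis cexp : forall c, const_expansion P Gstar dist Twa r c ((b - 1) * c).
Hypothesis recovery : forall (G : X -> 'I_K) (c rho : R), classifier G ->
  const_expansion P Gstar dist Twa r c rho ->
  RA P dist Twa r G < rho ->
  (forall i, Pr P [set x | G x = i] > 2 * Num.max c (RA P dist Twa r G)) ->
  exists pi : {perm 'I_K},
    mismatch P Gstar G pi <= Num.max c (RA P dist Twa r G) + RA P dist Twa r G.

Lemma Err_unsup_expansion_bound (G : X -> 'I_K) : classifier G ->
  let a := RA P dist Twa r G in
  (forall i, 2 * Num.max (a / (b - 1)) a < Pr P [set x | G x = i]) ->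
  Err_unsup P Gstar G <= Num.max (a / (b - 1)) a + a.
Proof.
move=> mG a balanced; set m := Num.max (a / (b - 1)) a.
have b1_gt0 : 0 < b - 1 by rewrite subr_gt0.
apply/ler_addgt0Pr => e e_gt0.
(* (iii) needs strict inequalities, so c is taken a little above a / (b - 1),
   by less than e and than a quarter of the smallest class margin. *)
set eps := \big[Num.min/1]_(i : 'I_K) (Pr P [set x | G x = i] - 2 * m).
have eps_gt0 : 0 < eps.
  by apply/bigmin_gtP; split => // i _; rewrite subr_gt0.
have eps_le i : eps <= Pr P [set x | G x = i] - 2 * m by apply: bigmin_le.
set del := Num.min e (eps / 4).
have del_gt0 : 0 < del by rewrite lt_min e_gt0 divr_gt0.
have del_le_e : del <= e by rewrite ge_min lexx.
have del_le_eps : del <= eps / 4 by rewrite ge_min lexx orbT.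
set c := a / (b - 1) + del.
have ab_le_m : a / (b - 1) <= m by rewrite /m le_max lexx.
have a_le_m : a <= m by rewrite /m le_max lexx orbT.
have max_c : Num.max c a <= m + del.
  by rewrite ge_max; apply/andP; split; rewrite /c; lra.
have a_lt_rho : a < (b - 1) * c.
  by rewrite mulrDr mulrC divfK ?lt0r_neq0 // ltrDl mulr_gt0.
have [pi mis] := recovery G c _ mG (cexp c) a_lt_rho
  (fun i => ltac:(have := eps_le i; lra)).
apply: le_trans (bigmin_le _ pi _) _.
by rewrite -/a in mis; apply: le_trans mis _; lra.
Qed.

End Recovery.

Theorem theorem1 (d : measure_display) (X : measurableType d) (R : realType)
  (P : probability X R) (K : nat) (Gstar : X -> 'I_K)
  (dist : X -> X -> R) (Twa : set (X -> X)) (r : R) (b mu : R) :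
  1 < b -> 0 <= mu ->
  classifier Gstar ->
  (* (i) *)
  mult_expansion P Gstar dist Twa r (1 / 2) b ->
  (* (ii) *)
  RA P dist Twa r Gstar <= mu ->
  (* (iii) *)
  (forall (G : X -> 'I_K) (c rho : R), classifier G ->
     const_expansion P Gstar dist Twa r c rho ->
     RA P dist Twa r G < rho ->
     (forall i : 'I_K, Pr P [set x | G x = i] >
                       2 * Num.max c (RA P dist Twa r G)) ->
     exists pi : {perm 'I_K},
       mismatch P Gstar G pi <=
         Num.max c (RA P dist Twa r G) + RA P dist Twa r G) ->
  (* class balance of the ground truth *)
  (forall y : 'I_K, Pr P (Qc Gstar y) > Num.max (2 / (b - 1)) 2 * mu) ->
  forall Ghat : X -> 'I_K,
    (* Ghat is a minimizer of the constrained problem *)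
    classifier Ghat ->
    (forall y : 'I_K, Pr P [set x | Ghat x = y] >
                      Num.max (2 / (b - 1)) 2 * RA P dist Twa r Ghat) ->
    (forall G : X -> 'I_K, classifier G ->
       (forall y : 'I_K, Pr P [set x | G x = y] >
                         Num.max (2 / (b - 1)) 2 * RA P dist Twa r G) ->
       RA P dist Twa r Ghat <= RA P dist Twa r G) ->
    Err_unsup P Gstar Ghat <= Num.max (2 / (b - 1)) 2 * mu.
Proof.
move=> b_gt1 mu_ge0 mGstar mexp RA_Gstar recovery balance Ghat mGhat
  feasible minimal.
have M_ge0 : 0 <= Num.max (2 / (b - 1)) 2 by rewrite le_max ler0n orbT.
set a := RA P dist Twa r Ghat.
have a_ge0 : 0 <= a := Pr_ge0 P _.
have Gstar_feasible y :
    Num.max (2 / (b - 1)) 2 * RA P dist Twa r Gstar < Pr P (Qc Gstar y).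
  by apply: le_lt_trans (balance y); apply: ler_wpM2l.
have a_le_mu : a <= mu := le_trans (minimal _ mGstar Gstar_feasible) RA_Gstar.
have Qc_gt0 i : 0 < Pr P (Qc Gstar i).
  by apply: le_lt_trans (balance i); apply: mulr_ge0.
have cexp := mult_expansion_const_expansion b_gt1 mGstar Qc_gt0 mexp.
apply: le_trans (Err_unsup_expansion_bound b_gt1 cexp recovery _ mGhat _) _.
  by move=> i; rewrite max_slack_scale.
apply: le_trans (_ : Num.max (2 / (b - 1)) 2 * a <= _); last exact: ler_wpM2l.
by rewrite -max_slack_scale // mulr_natl mulr2n lerD2l le_max lexx orbT.
Qed.
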